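(* Let $0<p<1$, $q=1-p$, let $\{X_i,i\geq 1\}$ be independent with $P\{X_i=1\}=p$, $P\{X_i=0\}=q$, and let $K,m\in\mathbb N$. Then $$P\big(M_{2K}^{(m)}\geq K-1\big)=\begin{cases}(K+2)(pq)^{K/2}-2(pq)^K, & \text{if } K \text{ is even},\\ (K+1-2Kpq)(pq)^{\frac{K-1}{2}}-(1-2pq)(pq)^{K-1}, & \text{if } K \text{ is odd}.\end{cases}$$
   Context: For $m,n\in\mathbb N$ let $S_n^{(m)}:=\sum_{i=m+1}^{n+m-1}\big[(1-X_{i-1})X_i+X_{i-1}(1-X_i)\big]$ be the number of switches among $X_m,\ldots,X_{m+n-1}$. For $m,N\in\mathbb N$ and $n=1,\ldots,N$ let $H_{m,n}^{(N)}:=\bigcup_{i=m}^{m+N-n+1}\{S_n^{(i)}=n-1\}$, and $M_N^{(m)}:=\max_{1\leq n\leq N}\{n-1 : H_{m,n}^{(N)}\neq\emptyset\}$ (length of the longest consecutive switches in $X_m,\ldots,X_{m+N-1}$). *)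

From HB Require Import structures.
From mathcomp Require Import all_boot all_order all_algebra.
From mathcomp Require Import all_classical all_reals all_analysis.
Set Implicit Arguments. Unset Strict Implicit. Unset Printing Implicit Defensive.
Import Order.TTheory GRing.Theory Num.Theory.
Local Open Scope classical_set_scope.
Local Open Scope ring_scope.

Definition mutually_independent d (T : measurableType d) (R : realType)
  (P : probability T R) (X : nat -> {RV P >-> R}) (I : set nat) : Prop :=
  forall (s : seq nat) (B : nat -> set R),
    uniq s -> (forall i, i \in s -> I i) -> (forall i, measurable (B i)) ->
    P (\big[setI/setT]_(i <- s) (X i @^-1` B i)) =
    (\prod_(i <- s) P (X i @^-1` B i))%E.

Definition switches (T : Type) (R : realType) (X : nat -> T -> R)
  (m n : nat) (t : T) : R :=
  \sum_(m.+1 <= i < n + m) ((1 - X i.-1 t) * X i t + X i.-1 t * (1 - X i t)).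

(* t \in H_{m,n}^{(N)}: some window X_i..X_{i+n-1}, m <= i <= m+N-n, consists
   entirely of switches (S_n^{(i)} = n-1). *)
Definition Hwin (T : Type) (R : realType) (X : nat -> T -> R)
  (m n N : nat) (t : T) : bool :=
  has (fun i => switches X i n t == (n - 1)%:R) (iota m (N - n + 1)).

(* M_N^{(m)}(t) = max_{1<=n<=N} { n-1 : t \in H_{m,n}^{(N)} } *)
Definition Mlong (T : Type) (R : realType) (X : nat -> T -> R)
  (m N : nat) (t : T) : nat :=
  \max_(1 <= n < N.+1 | Hwin X m n N t) (n - 1).

From HB Require Import structures.
From mathcomp Require Import all_boot all_order all_algebra.
From mathcomp Require Import all_classical all_reals all_analysis.
From mathcomp Require Import measurable_realfun.
From mathcomp Require Import ring zify.
Set Implicit Arguments. Unset Strict Implicit. Unset Printing Implicit Defensive.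
Import Order.TTheory GRing.Theory Num.Theory.
Local Open Scope classical_set_scope.
Local Open Scope ring_scope.

(* The event depends only on the word X_m ... X_(m+2K-1), whose letters are
   independent, equal to 1 with probability p; so its probability is the
   weighted count of the binary words of length 2K containing an alternating
   block of length K, which then starts at some i <= K.  Classify these words
   by the first such i.  For i = 0 the word begins with an alternating block.
   For 0 < i < K the letters i-1 and i must be equal, since any earlier block
   would contain both; this condition is also sufficient.  For i = K the same
   holds except that a block starting at 0 is now possible, and the words with
   both blocks consist of two alternating halves mirrored around the equal
   pair K-1, K.  Each case is a union of two cylinders (one per value of the
   repeated letter), whose weights are explicit products of p and q. *)

Lemma natr_count (R : pzSemiRingType) (I : Type) (s : seq I) (b : pred I) :
  \sum_(i <- s) ((b i)%:R : R) = (count b s)%:R.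
Proof.
rewrite -natr_sum -sum1_count; congr _%:R.
by rewrite [RHS]big_mkcond; apply: eq_bigr => i _; case: (b i).
Qed.

Lemma natr_has_first (R : pzSemiRingType) (P : pred nat) n :
  (has P (iota 0 n))%:R = \sum_(0 <= i < n) ((P i && ~~ has P (iota 0 i))%:R : R).
Proof.
elim: n => [|n IH]; first by rewrite big_geq.
rewrite big_nat_recr // -IH -addn1 iotaD has_cat /= orbF.
by case: (has P (iota 0 n)); case: (P n); rewrite /= ?addr0 ?add0r.
Qed.

Lemma natr_all (R : pzSemiRingType) (P : pred nat) (s : seq nat) :
  (all P s)%:R = \prod_(j <- s) ((P j)%:R : R).
Proof.
elim: s => [|x s IH]; first by rewrite big_nil.
by rewrite big_cons /= -IH; case: (P x); rewrite ?mul1r ?mul0r.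
Qed.

Lemma switch_indicator (R : pzRingType) (a b : bool) :
  (1 - a%:R) * b%:R + a%:R * (1 - b%:R) = (a != b)%:R :> R.
Proof.
by case: a; case: b;
  rewrite /= ?mulr1n ?mulr0n ?subrr ?subr0 ?mulr0 ?mul0r ?mulr1 ?mul1r ?addr0 ?add0r.
Qed.

Lemma leq_bigmax_has (a b k : nat) (P : pred nat) (F : nat -> nat) :
  (k <= \max_(a <= n < b | P n) F n)%N =
  (k == 0)%N || has (fun n => P n && (k <= F n)%N) (index_iota a b).
Proof.
elim: (index_iota a b) => [|n s IH]; first by rewrite big_nil leqn0 orbF.
rewrite big_cons /=; case: (P n) => //=.
by rewrite leq_max IH orbCA.
Qed.

Section Words.
Local Open Scope nat_scope.
Implicit Types (u v : nat -> bool) (x : bool).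

Definition cylinder a b v u := all (fun j => u j == v j) (index_iota a b).

Lemma cylinderP a b v u :
  reflect (forall j, a <= j < b -> u j = v j) (cylinder a b v u).
Proof.
apply: (iffP allP) => H j.
  by move=> hj; apply/eqP; apply: H; rewrite mem_index_iota.
by rewrite mem_index_iota => hj; apply/eqP; apply: H.
Qed.

Lemma cylinderS a b v u :
  a < b -> cylinder a b v u = (u a == v a) && cylinder a.+1 b v u.
Proof. by move=> ab; rewrite /cylinder /index_iota -subnSK. Qed.

Lemma cylinder_cat a b c v u : a <= b <= c ->
  cylinder a c v u = cylinder a b v u && cylinder b c v u.
Proof.
move=> abc; apply/cylinderP/andP => [H|[/cylinderP H1 /cylinderP H2] j hj].
  by split; apply/cylinderP => j hj; apply: H; lia.
by case: (ltnP j b) => hjb; [apply: H1 | apply: H2]; lia.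
Qed.

Lemma eq_cylinder a b v v' u : (forall j, a <= j < b -> v j = v' j) ->
  cylinder a b v u = cylinder a b v' u.
Proof.
by move=> vv'; apply: eq_in_all => j; rewrite mem_index_iota => /vv' ->.
Qed.

Definition alternates u i n :=
  all (fun k => u k != u k.+1) (index_iota i (i + n.-1)).

Lemma alternatesP u i n :
  reflect (forall k, i <= k < i + n.-1 -> u k != u k.+1) (alternates u i n).
Proof.
apply: (iffP allP) => H k.
  by move=> hk; apply: H; rewrite mem_index_iota.
by rewrite mem_index_iota; apply: H.
Qed.

Lemma alternates_leq u i n n' :
  n' <= n -> alternates u i n -> alternates u i n'.
Proof. by move=> n'n /alternatesP H; apply/alternatesP => k hk; apply: H; lia. Qed.

Lemma alternates_noswitch u i n k :
  alternates u i n -> i <= k -> u k = u k.+1 -> i + n.-1 <= k.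
Proof.
move=> /alternatesP H ik e; rewrite leqNgt; apply/negP => kn.
by move: (H k); rewrite ik kn e eqxx => /(_ isT).
Qed.

Lemma alternates_predn u i n : 0 < i -> u i.-1 != u i ->
  alternates u i n -> alternates u i.-1 n.
Proof.
move=> i0 ne /alternatesP H; apply/alternatesP => k hk.
have [->|ki] := eqVneq k i.-1; first by rewrite prednK.
by apply: H; lia.
Qed.

(* Truncated subtraction makes [alt_word x i] constantly [x] left of [i]. *)
Definition alt_word x i j := x (+) odd (j - i).

Lemma alt_word_id x i : alt_word x i i = x.
Proof. by rewrite /alt_word subnn addbF. Qed.

Lemma alternates_cylinder u i n :
  alternates u i n.+1 = cylinder i (i + n.+1) (alt_word (u i) i) u.
Proof.
rewrite /alt_word; apply/alternatesP/cylinderP => [H j hj|H k hk].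
  have Hl l : l <= n -> u (i + l) = u i (+) odd l.
    elim: l => [|l IH] hl; first by rewrite addn0 addbF.
    rewrite addnS /= addbN -IH; last lia.
    have := H (i + l); case: (u (i + l)); case: (u (i + l).+1) => //= ->; lia.
  by rewrite -(subnKC (_ : i <= j)) ?addKn ?Hl; lia.
by rewrite (H k) ?(H k.+1) ?subSn /= ?addbN; [case: (_ (+) _) | lia..].
Qed.

(* Equal letters [x] at positions [K-1], [K], alternating away from them. *)
Definition mirror_word K x j :=
  if j < K then x (+) odd (K.-1 - j) else alt_word x K j.

Lemma mirror_cylinder u K : 0 < K ->
  cylinder 0 (K + K) (mirror_word K (u K)) u =
  cylinder K.-1 (K + K) (alt_word (u K) K) u && alternates u 0 K.
Proof.
case: K => [|n] // _; set x := u n.+1.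
have left_half : cylinder 0 n.+1 (mirror_word n.+1 x) u =
    (u n == x) && cylinder 0 n.+1 (alt_word (u 0) 0) u.
  apply/cylinderP/andP => [H|[/eqP un /cylinderP H] j /andP[_ hj]].
    split; first by rewrite H /mirror_word ?ltnSn /= ?subnn ?addbF.
    apply/cylinderP => j /andP[_ hj]; rewrite H ?hj // (H 0) // /mirror_word hj /=.
    by rewrite /alt_word !subn0 oddB ?addbA // -ltnS.
  have u0 : u 0 = x (+) odd n.
    by rewrite -un (H n (ltnSn n)) /alt_word /= subn0 -addbA addbb addbF.
  rewrite (H j hj) /mirror_word hj /alt_word u0 /= subn0.
  by rewrite oddB -?addbA // -ltnS.
have xn : alt_word x n.+1 n = x by rewrite /alt_word (eqP (leqnSn n)) addbF.
rewrite (cylinder_cat (b := n.+1)) ?left_half; last lia.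
rewrite (@eq_cylinder n.+1 _ (mirror_word n.+1 x) (alt_word x n.+1)); last first.
  by move=> j /andP[hj _]; rewrite /mirror_word ltnNge hj.
rewrite /= [cylinder n _ _ _]cylinderS; last lia.
rewrite xn alternates_cylinder add0n.
by case: (u n == x); case: cylinder; case: cylinder.
Qed.

Definition has_alt_block K u := has (fun i => alternates u i K) (iota 0 K.+1).

Lemma first_alt_block u K i : 0 < i <= K ->
  alternates u i K && ~~ has (fun j => alternates u j K) (iota 0 i) =
  cylinder i.-1 (i + K) (alt_word (u i) i) u && ((i < K) || ~~ alternates u 0 K).
Proof.
case/andP=> i0 iK; case: K iK => [|n] iK; first lia.
rewrite cylinderS; last lia.
rewrite prednK // -alternates_cylinder /alt_word (_ : i.-1 - i = 0) ?addbF; last lia.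
have [Ai|_] := boolP (alternates u i n.+1); last by rewrite andbF.
rewrite andbT /=.
have [e|ne] := eqVneq (u i.-1) (u i); last first.
  apply: negbF; apply/hasP; exists i.-1; last exact: alternates_predn.
  by rewrite mem_iota; lia.
suff -> : has (fun j => alternates u j n.+1) (iota 0 i) = (n < i) && alternates u 0 n.+1.
  by rewrite negb_and -ltnNge.
apply/hasP/andP => [[j]|[_ A0]]; last by exists 0 => //; rewrite mem_iota.
rewrite mem_iota add0n => ji Aj.
have := alternates_noswitch Aj (k := i.-1); rewrite prednK // => /(_ _ e) jn.
have j0 : j = 0 by lia.
by split; [lia | rewrite -j0].
Qed.

End Words.

Lemma sum_cylinder_bool {R : pzSemiRingType} a b j0 (v : bool -> nat -> bool) u :
  (a <= j0 < b)%N -> (forall x, v x j0 = x) ->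
  \sum_(x : bool) ((cylinder a b (v x) u)%:R : R) = (cylinder a b (v (u j0)) u)%:R.
Proof.
move=> hj vj0.
have off x : x != u j0 -> cylinder a b (v x) u = false.
  by apply: contraNF => /cylinderP/(_ j0 hj) ->; rewrite vj0.
rewrite big_bool /=; case E: (u j0); [rewrite (off false) | rewrite (off true)];
  by rewrite ?E //= mulr0n ?addr0 ?add0r.
Qed.

Lemma natr_has_alt_block (R : pzRingType) K u : (0 < K)%N ->
  (has_alt_block K u)%:R =
  \sum_(x : bool) (cylinder 0 K (alt_word x 0) u)%:R
  + \sum_(1 <= i < K) \sum_(x : bool) (cylinder i.-1 (i + K) (alt_word x i) u)%:R
  + (\sum_(x : bool) (cylinder K.-1 (K + K) (alt_word x K) u)%:R
     - \sum_(x : bool) ((cylinder 0 (K + K) (mirror_word K x) u)%:R : R)).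
Proof.
move=> K0; rewrite natr_has_first big_ltn // big_nat_recr //= andbT -addrA.
congr (_ + (_ + _)).
- case: K K0 => [|n] // _.
  rewrite (sum_cylinder_bool (j0 := 0)) //; last by move=> x; apply: alt_word_id.
  by rewrite alternates_cylinder.
- apply: eq_big_nat => i /andP[i1 iK].
  rewrite first_alt_block ?iK /= ?andbT; last lia.
  rewrite (sum_cylinder_bool (j0 := i)) //; [lia | by move=> x; apply: alt_word_id].
rewrite first_alt_block ?K0 ?leqnn // ltnn /=.
rewrite (sum_cylinder_bool (j0 := K)); [|lia | by move=> x; apply: alt_word_id].
rewrite (sum_cylinder_bool (j0 := K)); last first.
- by move=> x; rewrite /mirror_word ltnn alt_word_id.
- lia.
rewrite mirror_cylinder //.
by case: (cylinder _ _ _ _); case: (alternates u 0 K);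
  rewrite /= ?mulr0n ?subr0 ?subrr.
Qed.

Definition max_switch_run N (u : nat -> bool) :=
  \max_(1 <= n < N.+1 | has (fun i => alternates u i n) (iota 0 (N - n + 1))) (n - 1).

Lemma leq_max_switch_run K N u : (0 < K)%N -> N = (K + K)%N ->
  (K - 1 <= max_switch_run N u)%N = has_alt_block K u.
Proof.
move=> K0 ->; rewrite leq_bigmax_has.
have [->|K1] := eqVneq K 1%N.
  by apply/esym/hasP; exists 0%N.
rewrite subn_eq0 leqNgt (_ : (1 < K)%N) /=; last lia.
apply/hasP/hasP => [[n]|[i]].
  rewrite mem_index_iota => hn /andP[/hasP[i] + Ai Kn].
  rewrite mem_iota => hi; exists i; first by rewrite mem_iota; lia.
  by apply: alternates_leq Ai; lia.
rewrite mem_iota => hi Ai; exists K; first by rewrite mem_index_iota; lia.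
by rewrite leqnn andbT; apply/hasP; exists i => //; rewrite mem_iota; lia.
Qed.

Section BernoulliWords.
Variables (R : comPzRingType) (p q : R) (N : nat).
Hypothesis hpq : p + q = 1.

Definition bweight (b : bool) : R := if b then p else q.

Definition word_of (w : {ffun 'I_N -> bool}) (j : nat) : bool :=
  if insub j is Some o then w o else false.

Lemma word_ofE w (j : 'I_N) : word_of w j = w j.
Proof. by rewrite /word_of valK. Qed.

Definition Eword (g : (nat -> bool) -> R) : R :=
  \sum_(w : {ffun 'I_N -> bool}) g (word_of w) * \prod_(j : 'I_N) bweight (w j).

Lemma eq_Eword g1 g2 : g1 =1 g2 -> Eword g1 = Eword g2.
Proof. by move=> g12; apply: eq_bigr => w _; rewrite g12. Qed.

Lemma EwordD g1 g2 : Eword (fun u => g1 u + g2 u) = Eword g1 + Eword g2.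
Proof. by rewrite /Eword -big_split; apply: eq_bigr => w _; rewrite mulrDl. Qed.

Lemma EwordB g1 g2 : Eword (fun u => g1 u - g2 u) = Eword g1 - Eword g2.
Proof. by rewrite /Eword -sumrB; apply: eq_bigr => w _; rewrite mulrBl. Qed.

Lemma Eword_sum (I : Type) (s : seq I) (P : pred I) g :
  Eword (fun u => \sum_(i <- s | P i) g i u) = \sum_(i <- s | P i) Eword (g i).
Proof. by rewrite /Eword exchange_big; apply: eq_bigr => w _; rewrite mulr_suml. Qed.

Lemma Eword_cylinder a b v : (b <= N)%N ->
  Eword (fun u => (cylinder a b v u)%:R) = \prod_(a <= j < b) bweight (v j).
Proof.
(* The sum over words of a product of letterwise factors is a product of sums
   over letters: a letter in [a, b) contributes its forced weight, any other
   letter p + q = 1. *)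
move=> bN.
have widen (G : nat -> R) :
    \prod_(a <= j < b) G j = \prod_(j < N | (a <= j < b)%N) G j.
  rewrite (big_nat_widen a b N) // (big_nat_widenl a 0) // big_mkord.
  by apply: eq_bigl => j /=; rewrite andbC.
pose F (j : 'I_N) (x : bool) :=
  (if (a <= j < b)%N then ((x == v j)%:R : R) else 1) * bweight x.
have factor w : (cylinder a b v (word_of w))%:R * \prod_(j : 'I_N) bweight (w j) =
    \prod_(j : 'I_N) F j (w j).
  rewrite /F big_split /=; congr (_ * _).
  rewrite /cylinder natr_all widen -big_mkcond /=.
  by apply: eq_bigr => j _; rewrite word_ofE.
rewrite /Eword (eq_bigr _ (fun w _ => factor w)) -bigA_distr_bigA /=.
rewrite widen [RHS]big_mkcond /=; apply: eq_bigr => j _; rewrite big_bool /F /=.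
case: ifP => _; last by rewrite !mul1r hpq.
by case: (v j); rewrite /= ?mulr1n ?mulr0n ?mul1r ?mul0r ?addr0 ?add0r.
Qed.

Lemma sum_word_weight :
  \sum_(w : {ffun 'I_N -> bool}) \prod_(j : 'I_N) bweight (w j) = 1.
Proof.
by rewrite -(bigA_distr_bigA (fun _ => bweight)) /= big1 // => j _; rewrite big_bool.
Qed.

Definition alt_weight n x := \prod_(0 <= j < n) bweight (x (+) odd j).

Lemma alt_weightE n x :
  alt_weight n x = (p * q) ^+ n./2 * (if odd n then bweight x else 1).
Proof.
elim: n => [|n IH]; first by rewrite /alt_weight big_geq // expr0 mulr1.
rewrite /alt_weight big_nat_recr // -/(alt_weight n x) IH.
rewrite -[n.+1./2]/(uphalf n) uphalf_half /=; clear IH.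
by case: (odd n); case: x; rewrite /bweight /= ?addbT ?addbF ?add0n ?exprS; ring.
Qed.

Lemma prod_alt_word x i n :
  \prod_(i <= j < i + n) bweight (alt_word x i j) = alt_weight n x.
Proof.
rewrite (big_addn 0 _ i) addKn.
by apply: eq_big_nat => j _; rewrite /alt_word addnK.
Qed.

Lemma Eword_alt_cylinder x i n : (0 < i)%N -> (i + n <= N)%N ->
  Eword (fun u => (cylinder i.-1 (i + n) (alt_word x i) u)%:R) =
  bweight x * alt_weight n x.
Proof.
move=> i0 iN; rewrite Eword_cylinder // big_ltn; last lia.
by rewrite prednK // prod_alt_word /alt_word (eqP (leq_pred i)) addbF.
Qed.

Lemma Eword_mirror_cylinder x K : (K + K <= N)%N ->
  Eword (fun u => (cylinder 0 (K + K) (mirror_word K x) u)%:R) =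
  alt_weight K x ^+ 2.
Proof.
move=> KN; rewrite Eword_cylinder // (big_cat_nat _ (n := K)) //; last lia.
rewrite expr2 -{2}(prod_alt_word x K K); congr (_ * _).
  rewrite big_nat_rev /alt_weight; apply: eq_big_nat => j /andP[_ hj].
  have lt : (K - j.+1 < K)%N by lia.
  have e : (K.-1 - (K - j.+1) = j)%N by lia.
  by rewrite /mirror_word add0n lt e.
by apply: eq_big_nat => j /andP[hj _]; rewrite /mirror_word ltnNge hj.
Qed.

Definition alt_block_prob K : R :=
  if odd K then
     (K.+1%:R - 2 * K%:R * p * q) * (p * q) ^+ ((K - 1)./2)
       - (1 - 2 * p * q) * (p * q) ^+ (K - 1)
   else
     (K.+2)%:R * (p * q) ^+ (K./2) - 2 * (p * q) ^+ K.

Lemma alt_block_probE K : (0 < K)%N ->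
  let Q := alt_weight K in
  \sum_(x : bool) Q x + (\sum_(x : bool) bweight x * Q x) *+ K.-1
  + (\sum_(x : bool) bweight x * Q x - \sum_(x : bool) Q x ^+ 2) =
  alt_block_prob K.
Proof.
move=> K0 Q; have hq : q = 1 - p by rewrite -hpq addrC addKr.
rewrite /Q !big_bool /= !alt_weightE /alt_block_prob /bweight /= hq.
have := odd_double_half K; set h := K./2.
case: (odd K) => /= Ke; rewrite -Ke in K0 *.
  by rewrite addKn doubleK -mulr_natr -addnn -!natr1 !natrD exprD; ring.
rewrite add0n -mulr_natr -subn1 -addnn natrB ?natrD -?natr1 ?exprD; first ring.
by move: K0; rewrite -addnn; lia.
Qed.

Lemma Eword_has_alt_block K : (0 < K)%N -> N = (K + K)%N ->
  Eword (fun u => (has_alt_block K u)%:R) = alt_block_prob K.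
Proof.
move=> K0 NK.
rewrite (eq_Eword (fun u => natr_has_alt_block R u K0)).
rewrite EwordD EwordB EwordD !Eword_sum -alt_block_probE //.
congr (_ + _ + (_ - _)).
- apply: eq_bigr => x _; rewrite Eword_cylinder ?NK ?leq_addr //.
  exact: (prod_alt_word x 0 K).
- rewrite -subn1 -sumr_const_nat; apply: eq_big_nat => i hi.
  rewrite Eword_sum; apply: eq_bigr => x _; apply: Eword_alt_cylinder => //; lia.
- by apply: eq_bigr => x _; rewrite Eword_alt_cylinder //; lia.
- by apply: eq_bigr => x _; rewrite Eword_mirror_cylinder // NK.
Qed.

End BernoulliWords.

Section MeasurableEvents.
Variables (d : measure_display) (T : measurableType d).

Lemma measurable_has (A : Type) (s : seq A) (Q : A -> T -> bool) :
  (forall a, measurable [set t | Q a t]) -> measurable [set t | has (Q ^~ t) s].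
Proof.
move=> mQ; rewrite (_ : [set t | _] = \big[setU/set0]_(a <- s) [set t | Q a t]).
  exact: bigsetU_measurable.
elim: s => [|a s IH] /=; first by rewrite big_nil; apply/seteqP; split.
by rewrite big_cons -IH; apply/seteqP; split => t /orP.
Qed.

Lemma measurable_eq_cst (R : realType) (f : T -> R) c :
  measurable_fun setT f -> measurable [set t | f t == c].
Proof.
move=> mf; rewrite (_ : [set t | f t == c] = f @^-1` [set c]).
  by rewrite -[f @^-1` _]setTI; apply: mf => //; exact: measurable_set1.
by apply/seteqP; split => t /= /eqP.
Qed.

End MeasurableEvents.

Section BernoulliSequence.
Variables (d : measure_display) (T : measurableType d) (R : realType).
Variables (P : probability T R) (X : nat -> {RV P >-> R}) (p q : R) (m N : nat).

Lemma measurable_Mlong_ge k :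
  measurable [set t | (k <= Mlong (fun i => X i) m N t)%N].
Proof.
have [->|k0] := eqVneq k 0%N.
  by rewrite (_ : [set t | _] = setT) //; apply/seteqP; split.
have E t : (k <= Mlong (fun i => X i) m N t)%N =
    has (fun n => Hwin (fun i => X i) m n N t)
      [seq n <- index_iota 1 N.+1 | (k <= n - 1)%N].
  by rewrite /Mlong leq_bigmax_has (negbTE k0) !has_count count_filter.
rewrite (eq_set (fun t => congr1 is_true (E t))).
apply: measurable_has => n; apply: measurable_has => i; apply: measurable_eq_cst.
apply: measurable_sum => j; apply: measurable_funD; apply: measurable_funM;
  by [apply: measurable_funB | idtac].
Qed.

Definition word_event (w : {ffun 'I_N -> bool}) : set T :=
  \big[setI/setT]_(i <- map (addn m) (iota 0 N))
     (X i @^-1` [set (word_of w (i - m))%:R]).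

Lemma word_eventP w t :
  word_event w t <-> forall j, (j < N)%N -> X (m + j) t = (word_of w j)%:R.
Proof.
rewrite /word_event -bigcap_seq; split => [H j jN | H _ /mapP[j + ->]].
  by have := H (m + j); rewrite addKn; apply; apply: map_f; rewrite mem_iota.
by rewrite mem_iota addKn => /andP[_ jN]; exact: H.
Qed.

Lemma measurable_word_event w : measurable (word_event w).
Proof.
by apply: bigsetI_measurable => i _; apply: measurable_funPTI; exact: measurable_set1.
Qed.

Lemma switches_word w t i n : word_event w t -> (0 < n)%N -> (i + n <= N)%N ->
  switches (fun i => X i) (m + i) n t =
  (count (fun k => word_of w k != word_of w k.+1) (index_iota i (i + n.-1)))%:R.
Proof.
move=> /word_eventP wt n0 inN.
rewrite /switches -natr_count (big_addn 0 _ (m + i).+1) [RHS](big_addn 0 _ i) addKn.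
rewrite (_ : (n + (m + i) - (m + i).+1 = n.-1)%N); last lia.
apply: eq_big_nat => k /andP[_ hk].
rewrite (_ : (k + (m + i).+1).-1 = m + (k + i))%N; last lia.
rewrite (_ : (k + (m + i).+1 = m + (k + i).+1))%N; last lia.
by rewrite !wt ?switch_indicator //; lia.
Qed.

Lemma Hwin_word w t n : word_event w t -> (0 < n <= N)%N ->
  Hwin (fun i => X i) m n N t =
  has (fun i => alternates (word_of w) i n) (iota 0 (N - n + 1)).
Proof.
move=> wt /andP[n0 nN]; rewrite /Hwin -{1}[m]addn0 iotaDl has_map.
apply: eq_in_has => i; rewrite mem_iota => /andP[_ hi] /=.
rewrite (switches_word wt) //; last lia.
by rewrite eqr_nat /alternates all_count /index_iota size_iota addKn subn1.
Qed.

Lemma Mlong_word w t : word_event w t ->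
  Mlong (fun i => X i) m N t = max_switch_run N (word_of w).
Proof.
move=> wt; rewrite /Mlong /max_switch_run big_nat_cond [RHS]big_nat_cond.
apply: eq_bigl => n; case: (boolP (1 <= n < N.+1)%N) => //= hn.
by rewrite (Hwin_word wt) // -ltnS.
Qed.

Hypothesis hpq : p + q = 1.
Hypothesis hX1 : forall i, (1 <= i)%N -> P (X i @^-1` [set 1]) = p%:E.
Hypothesis hX0 : forall i, (1 <= i)%N -> P (X i @^-1` [set 0]) = q%:E.
Hypothesis hind : mutually_independent X [set i | (1 <= i)%N].
Hypothesis hm : (1 <= m)%N.

Lemma P_word_event w : P (word_event w) = (\prod_(j : 'I_N) bweight p q (w j))%:E.
Proof.
rewrite /word_event hind; first last.
- by move=> i; exact: measurable_set1.
- by move=> i /mapP[j _ ->] /=; lia.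
- by rewrite map_inj_uniq ?iota_uniq //; exact: addnI.
have -> : \prod_(j < N) bweight p q (w j) =
    \prod_(j <- iota 0 N) bweight p q (word_of w j).
  have -> : iota 0 N = index_iota 0 N by rewrite /index_iota subn0.
  by rewrite big_mkord; apply: eq_bigr => j _; rewrite word_ofE.
rewrite big_map -prodEFin; apply: eq_bigr => j _; rewrite addKn.
by case: (word_of w j); [apply: hX1 | apply: hX0]; lia.
Qed.

Lemma word_event_disj w w' : w != w' -> word_event w `&` word_event w' = set0.
Proof.
move=> ww'; apply/seteqP; split => [t [/word_eventP H /word_eventP H']|//].
apply: (negP ww'); apply/eqP/ffunP => j.
have := H j (ltn_ord j); rewrite H' ?ltn_ord // !word_ofE.
by move/eqP; rewrite eqr_nat => /eqP; case: (w j); case: (w' j).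
Qed.

Lemma P_bigsetU_word_event s : uniq s ->
  P (\big[setU/set0]_(w <- s) word_event w) = (\sum_(w <- s) P (word_event w))%E.
Proof.
elim: s => [|w s IH] /=; first by rewrite !big_nil measure0.
case/andP => ws us; rewrite !big_cons measureU.
- by rewrite -(IH us).
- exact: measurable_word_event.
- by apply: bigsetU_measurable => w' _; exact: measurable_word_event.
apply/seteqP; split => // t [wt]; rewrite -bigcup_seq => -[w' w's w't].
have : (word_event w `&` word_event w') t by [].
by rewrite word_event_disj //; apply: contraNneq ws => ->.
Qed.

Lemma P_word_determined (F : set T) (g : (nat -> bool) -> bool) :
  measurable F -> (forall w t, word_event w t -> F t <-> g (word_of w)) ->
  P F = (Eword p q N (fun u => (g u)%:R))%:E.
Proof.
move=> mF Fg.
pose G := \big[setU/set0]_(w <- index_enum {ffun 'I_N -> bool}) word_event w.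
have mG : measurable G.
  by apply: bigsetU_measurable => w _; exact: measurable_word_event.
have PG : P (~` G) = 0%E.
  rewrite probability_setC // P_bigsetU_word_event ?index_enum_uniq //.
  by rewrite (eq_bigr _ (fun w _ => P_word_event w)) sumEFin sum_word_weight // subee.
have FG :
    F `&` G = \big[setU/set0]_(w <- index_enum _ | g (word_of w)) word_event w.
  rewrite -bigcup_seq_cond; apply/seteqP; split => t.
    case=> Ft; rewrite /G -bigcup_seq => -[w _ wt].
    by exists w => //; rewrite /= mem_index_enum; apply/(Fg w t wt).
  case=> w /andP[_ gw] wt; split; first exact/(Fg w t wt).
  by rewrite /G -bigcup_seq; exists w => //; exact: mem_index_enum.
(* [measureDI] sees [P] through another coercion, hence the detour. *)
have PF : P F = P (F `&` G).
  have PFG := subset_measure0 (measurableD mF mG) (measurableC mG)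
    (fun t => @proj2 _ _) PG.
  by have := measureDI P mF mG; rewrite PFG add0e.
rewrite PF FG -big_filter P_bigsetU_word_event ?filter_uniq ?index_enum_uniq //.
rewrite big_filter big_mkcond /= /Eword -sumEFin; apply: eq_bigr => w _.
by rewrite P_word_event; case: (g (word_of w)); rewrite /= ?mul1r ?mul0r.
Qed.

End BernoulliSequence.

Theorem lemma3p2 (d : measure_display) (T : measurableType d) (R : realType)
  (P : probability T R) (X : nat -> {RV P >-> R}) (p q : R)
  (hp0 : 0 < p) (hp1 : p < 1) (hq : q = 1 - p)
  (hX1 : forall i, (1 <= i)%N -> P (X i @^-1` [set 1]) = p%:E)
  (hX0 : forall i, (1 <= i)%N -> P (X i @^-1` [set 0]) = q%:E)
  (hind : mutually_independent X [set i | (1 <= i)%N])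
  (K m : nat) (hK : (1 <= K)%N) (hm : (1 <= m)%N) :
  P [set t | (K - 1 <= Mlong (fun i => X i) m (2 * K) t)%N] =
  (if odd K then
     (K.+1%:R - 2 * K%:R * p * q) * (p * q) ^+ ((K - 1)./2)
       - (1 - 2 * p * q) * (p * q) ^+ (K - 1)
   else
     (K.+2)%:R * (p * q) ^+ (K./2) - 2 * (p * q) ^+ K)%:E.
Proof.
have hpq : p + q = 1 by rewrite hq addrC subrK.
have NK : (2 * K = K + K)%N by rewrite mul2n addnn.
rewrite -/(alt_block_prob p q K) -(Eword_has_alt_block hpq hK NK).
apply: (P_word_determined hpq hX1 hX0 hind hm); first exact: measurable_Mlong_ge.
by move=> w t wt; rewrite /= (Mlong_word wt) leq_max_switch_run.
Qed.
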